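(* Consider the static single-object erasure-coded Byzantine read/write protocol described in the context over a set $C$ of flexnodes, at most $b<\frac{|C|-k}{3}$ of which are Byzantine. In any execution, let $\pi$ and $\omega$ be complete operations, where $\pi$ is a read or a write and $\omega$ is a write, such that $\pi$ completes before $\omega$ is invoked. If $\pi$ executes put-data$(\langle t_\pi,v_\pi\rangle)$ on $C$ and $\omega$ executes put-data$(\langle t_\omega,v_\omega\rangle)$ on $C$, then $t_\omega>t_\pi$.
   Context: Model. $C$ is a fixed finite set of processes (''flexnodes'') over asynchronous reliable channels (messages between nonfaulty processes eventually delivered unaltered). Up to $b$ flexnodes may be Byzantine. Processes invoking reads/writes follow the protocol but may crash. Signatures are unforgeable. An $[n,k]$ RLNC code with $n=|C|$: $\mathrm{Encode}(v)$ produces $|C|$ coded elements, any $k$ of which (from the same encoding) recover $v$. Tags are pairs $(z,w)$, $z\in\mathbb{N}$, $w$ a writer identifier from a totally ordered set, with $(z_1,w_1)<(z_2,w_2)$ iff $z_1<z_2$, or $z_1=z_2$ and $w_1<w_2$. A parameter $\delta\ge1$ is fixed. A quorum is any subset of $C$ of size $\lceil (2|C|+k)/3\rceil$. State. Each flexnode keeps a set $List$ of signed triples $(\langle t,e\rangle,\sigma)$, initially holding the initial pair with tag $t_0$. Primitives (by flexnode $p$): get-tag: query all, each replies with its signed max-tag entry, wait for replies from a quorum, return the maximum tag among replies with valid signatures. put-data$(\langle t,v\rangle)$: encode $v$ into $e_1,\dots,e_{|C|}$, send $\langle t,e_j\rangle$ signed by $p$ to the $j$-th flexnode; a receiver adds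 it to $List$ if the signature verifies and no entry with tag $t$ exists, then if $|List|>\delta+1$ removes the entries with minimum tag, and acknowledges; $p$ waits for a quorum of acknowledgements. get-data: query all, each replies with its $List$, wait for a quorum, keep verified pairs, take the maximum tag appearing in at least $k$ received lists, decode and return it; if none exists the primitive does not complete. Operations: read = get-data then put-data of the obtained pair, returning it; write$(v)$ by writer $w$ = get-tag returning $t$, then put-data$(\langle (t.z+1,w),v\rangle)$. *)

From HB Require Import structures.
From mathcomp Require Import all_boot all_order.
Set Implicit Arguments. Unset Strict Implicit. Unset Printing Implicit Defensive.
Import Order.TTheory.

Section Protocol.
Variables (Node : finType) (d : Order.disp_t) (W : orderType d) (V : Type) (E : eqType).

Definition ptag := (nat * W)%type.
Definition tag_lt (t1 t2 : ptag) : bool :=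
  (t1.1 < t2.1)%N || ((t1.1 == t2.1) && (t1.2 < t2.2)%O).
Definition tag_le (t1 t2 : ptag) : bool := (t1 == t2) || tag_lt t1 t2.

(* A signed triple (<t, e>, sigma): ptag, coded element, identity of the signer.
   The signature is modelled symbolically: it verifies iff the signer really
   produced it, i.e. iff the triple belongs to the global set [signed] below. *)
Definition entry := (ptag * E * W)%type.
Definition etag (x : entry) : ptag := x.1.1.
Definition eelem (x : entry) : E := x.1.2.

(* Message bodies; every request/reply carries the nonce (p, c) = (invoking
   process, number of its operation). *)
Inductive body :=
| QTag of W & nat
| RTag of W & nat & entry
| QData of W & nat
| RData of W & nat & seq entry
| Put of W & nat & entry
| Ack of W & nat.

Definition body_entries (b : body) : seq entry :=
  match b with
  | RTag _ _ e => [:: e]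
  | RData _ _ l => l
  | Put _ _ e => [:: e]
  | _ => [::]
  end.

Inductive addr := ANode of Node | AProc of W.

(* msrc is the (authenticated) sender. *)
Record msg := Msg { msrc : addr; mdst : addr; mbody : body }.

Inductive op := ORead | OWrite of V.

Inductive cstate :=
| Idle
| GetTag of V & seq (Node * entry)          (* write: waiting in get-ptag *)
| GetData of seq (Node * seq entry)         (* read: waiting in get-data *)
| PutData of ptag & seq Node
| Crashed.

Record state := St {
  lists  : Node -> seq entry;
  net    : seq msg;
  cst    : W -> cstate;
  cnt    : W -> nat;            (* number of operations invoked so far *)
  signed : seq entry            (* all signatures produced so far *)
}.

Inductive label :=
| LInvoke of W & nat & op       (* process p invokes its n-th operation *)
| LPut of W & nat & ptag         (* operation (p,n) executes put-data(<t,_>) *)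
| LComplete of W & nat
| LCrash of W
| LInternal.

Definition upd (A : eqType) (R : Type) (f : A -> R) (a : A) (r : R) : A -> R :=
  fun x => if x == a then r else f x.

Variables (k b delta : nat) (Byz : {set Node}) (encode : V -> Node -> E)
          (decode : seq E -> V).

(* quorum size: ceil((2|C| + k) / 3) *)
Definition qsize : nat := (2 * #|Node| + k + 2) %/ 3.

(* "removes the entries with minimum ptag" when |List| > delta + 1 *)
Definition evict (l : seq entry) : seq entry :=
  if delta.+1 < size l then
    [seq x <- l | ~~ all (fun y => tag_le (etag x) (etag y)) l]
  else l.

Definition store (sg : seq entry) (e : entry) (l : seq entry) : seq entry :=
  evict (if (e \in sg) && ~~ has (fun x => etag x == etag e) l
         then rcons l e else l).

Definition crecv (p : W) (cur : nat) (cs : cstate) (src : addr) (bd : body)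
  : cstate :=
  match src with
  | ANode j =>
    match cs, bd with
    | GetTag v reps, RTag p' c e =>
        if [&& p' == p, c == cur & j \notin unzip1 reps]
        then GetTag v (rcons reps (j, e)) else cs
    | GetData reps, RData p' c l =>
        if [&& p' == p, c == cur & j \notin unzip1 reps]
        then GetData (rcons reps (j, l)) else cs
    | PutData t acks, Ack p' c =>
        if [&& p' == p, c == cur & j \notin acks]
        then PutData t (rcons acks j) else cs
    | _, _ => cs
    end
  | AProc _ => cs
  end.

Definition putdata (s : state) (p : W) (t : ptag) (v : V) : state :=
  St (lists s)
     (net s ++ [seq Msg (AProc p) (ANode j) (Put p (cnt s p) (t, encode v j, p))
               | j <- enum Node])
     (upd (cst s) p (PutData t [::]))
     (cnt s)
     (signed s ++ [seq (t, encode v j, p) | j <- enum Node]).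

Definition bcast (p : W) (bd : body) : seq msg :=
  [seq Msg (AProc p) (ANode j) bd | j <- enum Node].

Definition setnet (s : state) (n : seq msg) : state :=
  St (lists s) n (cst s) (cnt s) (signed s).

Inductive step : state -> label -> state -> Prop :=
| SInvoke s p o :
    cst s p = Idle ->
    step s (LInvoke p (cnt s p).+1 o)
      (St (lists s)
          (net s ++ bcast p (match o with
                             | ORead => QData p (cnt s p).+1
                             | OWrite _ => QTag p (cnt s p).+1 end))
          (upd (cst s) p (match o with
                          | ORead => GetData [::]
                          | OWrite v => GetTag v [::] end))
          (upd (cnt s) p (cnt s p).+1)
          (signed s))
| SCrash s p :
    cst s p <> Crashed ->
    step s (LCrash p) (St (lists s) (net s) (upd (cst s) p Crashed) (cnt s) (signed s))
| SNodeQTag s n1 n2 j src p c e :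
    net s = n1 ++ Msg src (ANode j) (QTag p c) :: n2 -> j \notin Byz ->
    e \in lists s j -> all (fun y => tag_le (etag y) (etag e)) (lists s j) ->
    step s LInternal (setnet s (n1 ++ n2 ++ [:: Msg (ANode j) src (RTag p c e)]))
| SNodeQData s n1 n2 j src p c :
    net s = n1 ++ Msg src (ANode j) (QData p c) :: n2 -> j \notin Byz ->
    step s LInternal
      (setnet s (n1 ++ n2 ++ [:: Msg (ANode j) src (RData p c (lists s j))]))
| SNodePut s n1 n2 j src p c e :
    net s = n1 ++ Msg src (ANode j) (Put p c e) :: n2 -> j \notin Byz ->
    step s LInternal
      (St (upd (lists s) j (store (signed s) e (lists s j)))
          (n1 ++ n2 ++ [:: Msg (ANode j) src (Ack p c)])
          (cst s) (cnt s) (signed s))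
(* any other message to a correct flexnode, or any message to a Byzantine
   flexnode, is consumed without effect (Byzantine nodes act via SByz) *)
| SNodeOther s n1 n2 j src bd :
    net s = n1 ++ Msg src (ANode j) bd :: n2 ->
    (j \in Byz \/ match bd with QTag _ _ | QData _ _ | Put _ _ _ => False | _ => True end) ->
    step s LInternal (setnet s (n1 ++ n2))
| SClient s n1 n2 p src bd :
    net s = n1 ++ Msg src (AProc p) bd :: n2 ->
    step s LInternal
      (St (lists s) (n1 ++ n2) (upd (cst s) p (crecv p (cnt s p) (cst s p) src bd))
          (cnt s) (signed s))
(* a Byzantine flexnode sends an arbitrary message; it cannot forge
   signatures, so every signed triple it sends was already produced *)
| SByz s j dst bd :
    j \in Byz -> all (fun x => x \in signed s) (body_entries bd) ->
    step s LInternal (setnet s (net s ++ [:: Msg (ANode j) dst bd]))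
| SFinTag s p v reps t :
    cst s p = GetTag v reps -> qsize <= size reps ->
    t \in [seq etag x.2 | x <- reps & x.2 \in signed s] ->
    all (fun x => tag_le (etag x.2) t) [seq x <- reps | x.2 \in signed s] ->
    step s (LPut p (cnt s p) (t.1.+1, p)) (putdata s p (t.1.+1, p) v)
| SFinData s p reps t v :
    cst s p = GetData reps -> qsize <= size reps ->
    let vl := [seq [seq x <- r.2 | x \in signed s] | r <- reps] in
    let occ := fun t' => count (fun l => has (fun x => etag x == t') l) vl in
    k <= occ t ->
    (forall t', k <= occ t' -> tag_le t' t) ->
    v = decode [seq eelem x | x <- flatten vl & etag x == t] ->
    step s (LPut p (cnt s p) t) (putdata s p t v)
| SFinPut s p t acks :
    cst s p = PutData t acks -> qsize <= size acks ->
    step s (LComplete p (cnt s p))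
      (St (lists s) (net s) (upd (cst s) p Idle) (cnt s) (signed s)).

Inductive run : state -> seq label -> state -> Prop :=
| RNil s : run s [::] s
| RCons s l s' tr s'' : step s l s' -> run s' tr s'' -> run s (l :: tr) s''.

Definition init (t0 : ptag) (v0 : V) (p0 : W) : state :=
  St (fun j => [:: (t0, encode v0 j, p0)]) [::] (fun _ => Idle) (fun _ => 0)
     [seq (t0, encode v0 j, p0) | j <- enum Node].

End Protocol.

From HB Require Import structures.
From mathcomp Require Import all_boot all_order.
From mathcomp Require Import zify.
From Stdlib Require List.
Set Implicit Arguments. Unset Strict Implicit. Unset Printing Implicit Defensive.
Import Order.TTheory.

(* A put-data that completes has been acknowledged by a quorum A, and from then on every correct
   node of A stores an entry whose tag is at least t_pi: a List only changes by adding an entry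
   and evicting minimal ones, and as its tags are pairwise distinct, eviction never removes its
   largest entry. The get-tag of omega starts after pi has completed, so its requests carry a
   fresh nonce and a correct node of A can only answer them with its current maximal entry.
   Two quorums share a correct node because 3b + k < |C|, hence the maximal tag t collected by
   omega is at least t_pi, and omega writes with the tag (t.z + 1, w) > t_pi. *)

Lemma In_cat (A : Type) (m : A) (n1 n2 : seq A) :
  List.In m (n1 ++ n2) <-> List.In m n1 \/ List.In m n2.
Proof. by elim: n1 => [|y n1 IH] /=; [tauto | rewrite IH; tauto]. Qed.

Lemma In_replace_inv (A : Type) (l n1 n2 : seq A) (x m m' : A) :
  l = n1 ++ x :: n2 -> List.In m (n1 ++ n2 ++ [:: m']) -> List.In m l \/ m = m'.
Proof. by move=> ->; rewrite !In_cat /= => -[|[|[<-|[]]]]; tauto. Qed.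

Lemma In_remove_inv (A : Type) (l n1 n2 : seq A) (x m : A) :
  l = n1 ++ x :: n2 -> List.In m (n1 ++ n2) -> List.In m l.
Proof. by move=> ->; rewrite !In_cat /=; tauto. Qed.

Lemma In_mid (A : Type) (l n1 n2 : seq A) (x : A) : l = n1 ++ x :: n2 -> List.In x l.
Proof. by move=> ->; rewrite In_cat /=; tauto. Qed.

Section Tags.
Variables (d : Order.disp_t) (W : orderType d).
Implicit Types t : ptag W.
Local Notation lexi := (nat *l W)%type.

Lemma tag_leE t1 t2 : tag_le t1 t2 = ((t1 : lexi) <= t2)%O.
Proof.
case: t1 t2 => [a x] [c y]; rewrite /tag_le /tag_lt lexi_pair !leEnat /= xpair_eqE.
by case: ltngtP; rewrite ?le_eqVlt.
Qed.

Lemma tag_ltE t1 t2 : tag_lt t1 t2 = ((t1 : lexi) < t2)%O.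
Proof. by case: t1 t2 => [a x] [c y]; rewrite /tag_lt ltxi_pair !leEnat /=; case: ltngtP. Qed.

Lemma tag_le_refl t : tag_le t t.
Proof. by rewrite tag_leE. Qed.

Lemma tag_le_trans t1 t2 t3 : tag_le t1 t2 -> tag_le t2 t3 -> tag_le t1 t3.
Proof. rewrite !tag_leE; exact: le_trans. Qed.

Lemma tag_le_anti t1 t2 : tag_le t1 t2 -> tag_le t2 t1 -> t1 = t2.
Proof. by rewrite !tag_leE => h12 h21; apply: (@le_anti _ lexi); rewrite h12 h21. Qed.

Lemma tag_lt_next t t' (w : W) : tag_le t t' -> tag_lt t (t'.1.+1, w).
Proof.
rewrite tag_leE tag_ltE => /le_lt_trans; apply.
by case: t' => z x; rewrite ltxi_pair !leEnat /= ltnn leqnSn.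
Qed.

End Tags.

Section NodeLists.
Variables (d : Order.disp_t) (W : orderType d) (E : eqType) (delta : nat).
Implicit Types (t : ptag W) (e : entry W E) (l sg : seq (entry W E)).

Definition uniq_tags l := uniq (map (@etag _ W E) l).

Definition has_tag_ge t l := has (fun x => tag_le t (etag x)) l.

Definition add_entry sg e l :=
  if (e \in sg) && ~~ has (fun x => etag x == etag e) l then rcons l e else l.

Lemma evict_subseq l : subseq (evict delta l) l.
Proof. by rewrite /evict; case: ifP => // _; apply: filter_subseq. Qed.

Lemma evict_uniq_tags l : uniq_tags l -> uniq_tags (evict delta l).
Proof. by apply: subseq_uniq; apply: map_subseq; apply: evict_subseq. Qed.

(* Distinct tags leave a unique minimal entry, so eviction keeps every other one. *)
Lemma uniq_tags_has_nonmin l : uniq_tags l -> 1 < size l ->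
  has (fun x => ~~ all (fun y => tag_le (etag x) (etag y)) l) l.
Proof.
case: l => [|x [|y l]] // /andP[+ _] _; rewrite inE negb_or => /andP[neq_xy _].
apply: contraT => /hasPn nonmin.
have /negbNE/and3P[_ le_xy _] := nonmin x (mem_head _ _).
have y_in : y \in [:: x, y & l] by rewrite !inE eqxx orbT.
have /negbNE/and3P[le_yx _ _] := nonmin y y_in.
by rewrite (tag_le_anti le_xy le_yx) eqxx in neq_xy.
Qed.

Lemma evict_has_tag_ge t l : uniq_tags l -> has_tag_ge t l -> has_tag_ge t (evict delta l).
Proof.
rewrite /evict; case: ifP => // big uniq_l /hasP[y yl le_ty].
have [z zl z_nonmin] := hasP (uniq_tags_has_nonmin uniq_l (leq_ltn_trans (ltn0Sn _) big)).
apply/hasP; have [y_min|y_nonmin] := boolP (all (fun x => tag_le (etag y) (etag x)) l).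
  by exists z; [rewrite mem_filter z_nonmin | apply: tag_le_trans le_ty (allP y_min z zl)].
by exists y; rewrite // mem_filter y_nonmin.
Qed.

Lemma add_entry_uniq_tags sg e l : uniq_tags l -> uniq_tags (add_entry sg e l).
Proof.
rewrite /add_entry; case: ifP => // /andP[_ fresh] uniq_l.
move: uniq_l; rewrite /uniq_tags map_rcons rcons_uniq => ->; rewrite andbT.
by apply: contra fresh => /mapP[x xl ->]; apply/hasP; exists x.
Qed.

Lemma add_entry_subset sg e l : {subset l <= add_entry sg e l}.
Proof. by move=> x xl; rewrite /add_entry; case: ifP; rewrite // mem_rcons inE xl orbT. Qed.

Lemma store_uniq_tags sg e l : uniq_tags l -> uniq_tags (store delta sg e l).
Proof. by move=> uniq_l; apply/evict_uniq_tags/add_entry_uniq_tags. Qed.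

Lemma store_has_tag_ge t sg e l :
  uniq_tags l -> has_tag_ge t l -> has_tag_ge t (store delta sg e l).
Proof.
move=> uniq_l /hasP[x xl le_tx]; apply: evict_has_tag_ge; first exact: add_entry_uniq_tags.
by apply/hasP; exists x => //; apply: add_entry_subset.
Qed.

Lemma store_has_tag_ge_self sg e l :
  e \in sg -> uniq_tags l -> has_tag_ge (etag e) (store delta sg e l).
Proof.
move=> e_sg uniq_l; apply: evict_has_tag_ge; first exact: add_entry_uniq_tags.
rewrite /add_entry e_sg /=; case: hasP => [[x xl /eqP <-]|_].
  by apply/hasP; exists x; rewrite ?tag_le_refl.
by rewrite /has_tag_ge has_rcons tag_le_refl.
Qed.

Lemma store_signed sg e l : {subset l <= sg} -> {subset store delta sg e l <= sg}.
Proof.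
move=> l_sg x /(mem_subseq (evict_subseq _)); rewrite /add_entry.
by case: ifP => [/andP[e_sg _]|_]; rewrite ?mem_rcons ?inE; [case/predU1P=> [->|/l_sg]|move/l_sg].
Qed.

End NodeLists.

Lemma quorum_intersect (Node : finType) (k : nat) (B : {set Node}) (Q1 Q2 : seq Node) :
  3 * #|B| + k < #|Node| -> uniq Q1 -> uniq Q2 ->
  qsize Node k <= size Q1 -> qsize Node k <= size Q2 ->
  exists j, [/\ j \in Q1, j \in Q2 & j \notin B].
Proof.
move=> resilient uniq1 uniq2 big1 big2.
have card_set Q : uniq Q -> #|[set j in Q]| = size Q by move=> uQ; rewrite cardsE; apply/card_uniqP.
have /subsetPn[j /setIP[]] : ~~ ([set j in Q1] :&: [set j in Q2] \subset B).
  apply/negP => /subset_leq_card.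
  move: (cardsUI [set j in Q1] [set j in Q2]) (max_card ([set j in Q1] :|: [set j in Q2])).
  rewrite !card_set //; move: big1 big2 resilient; rewrite /qsize.
  (* [set] merges occurrences that differ only in their canonical instances, which lia would
     otherwise treat as distinct atoms. *)
  by set n := #|Node|; set s1 := size Q1; set s2 := size Q2; lia.
by rewrite !inE => j1 j2 jB; exists j.
Qed.

Section Protocol.
Variables (Node : finType) (d : Order.disp_t) (W : orderType d) (V : Type) (E : eqType).
Variables (k delta : nat) (Byz : {set Node}) (encode : V -> Node -> E) (decode : seq E -> V).

Local Notation pstate := (state Node W V E).
Local Notation pstep := (step k delta Byz encode decode).
Local Notation node j := (ANode W j).
Local Notation proc q := (AProc Node q).

Inductive phase := ReadQuery | WriteQuery | Putting of ptag W | Quiescent.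

Definition phase_of (cs : cstate Node W V E) : phase :=
  match cs with
  | GetData _ => ReadQuery
  | GetTag _ _ => WriteQuery
  | PutData t _ => Putting t
  | _ => Quiescent
  end.

Definition is_query (ph : phase) : bool :=
  match ph with ReadQuery | WriteQuery => true | _ => false end.

(* [Quiescent] is reachable from every phase because a process may crash. *)
Definition phase_next (ph ph' : phase) : Prop :=
  [\/ ph' = ph, ph' = Quiescent | is_query ph /\ exists t, ph' = Putting t].

Definition phase_ok (P : ptag W -> Prop) (ph : phase) : Prop :=
  match ph with Putting t => P t | Quiescent => True | _ => False end.

Lemma phase_ok_next (P P' : ptag W -> Prop) ph ph' :
  (forall t, P t -> P' t) -> phase_next ph ph' -> phase_ok P ph -> phase_ok P' ph'.
Proof. by move=> PP' [->|->|[+ [t ->]]]; case: ph => // t; apply: PP'. Qed.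

Variant crecv_spec (p : W) (c : nat) (src : addr Node W) (bd : body W E) :
  cstate Node W V E -> cstate Node W V E -> Prop :=
| CrecvIgnore cs : crecv_spec p c src bd cs cs
| CrecvTag j v reps e : src = node j -> bd = RTag p c e -> j \notin unzip1 reps ->
    crecv_spec p c src bd (GetTag v reps) (GetTag v (rcons reps (j, e)))
| CrecvData reps reps' : crecv_spec p c src bd (GetData V reps) (GetData V reps')
| CrecvAck j t acks : src = node j -> bd = Ack E p c -> j \notin acks ->
    crecv_spec p c src bd (PutData V E t acks) (PutData V E t (rcons acks j)).

Lemma crecvP p c cs src bd : crecv_spec p c src bd cs (crecv p c cs src bd).
Proof.
case: src => [j|q]; last exact: CrecvIgnore.
case: cs => [|v reps|reps|t acks|]; try exact: CrecvIgnore;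
case: bd => [p' c'|p' c' e|p' c'|p' c' l|p' c' e|p' c'] /=; try exact: CrecvIgnore;
by case: ifP => [/and3P[/eqP-> /eqP-> fresh]|_]; constructor.
Qed.

Lemma phase_crecv p c cs src bd : phase_of (crecv p c cs src bd) = phase_of cs.
Proof. by case: crecvP. Qed.

Definition monotone (s s' : pstate) : Prop :=
  [/\ forall q, cnt s q <= cnt s' q,
      {subset signed s <= signed s'},
      forall q, cnt s' q = cnt s q -> phase_next (phase_of (cst s q)) (phase_of (cst s' q))
    & forall j, lists s' j = lists s j \/
        exists2 e, j \notin Byz & lists s' j = store delta (signed s) e (lists s j)].

Lemma monotone_frame s s' :
  lists s' = lists s -> cnt s' = cnt s -> {subset signed s <= signed s'} ->
  (forall q, phase_next (phase_of (cst s q)) (phase_of (cst s' q))) -> monotone s s'.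
Proof.
move=> eq_l eq_c sg_sub ph_next.
by split=> [q|//|q _|j]; [rewrite eq_c | apply: ph_next | left; rewrite eq_l].
Qed.

Lemma phase_next_upd (cs : W -> cstate Node W V E) p cs' :
  phase_next (phase_of (cs p)) (phase_of cs') ->
  forall q, phase_next (phase_of (cs q)) (phase_of (upd cs p cs' q)).
Proof. by move=> ph_next q; rewrite /upd; case: eqP => [->|_] //; constructor 1. Qed.

Lemma putdata_monotone s p t v :
  is_query (phase_of (cst s p)) -> monotone s (putdata encode s p t v).
Proof.
move=> query; apply: monotone_frame => // [x|]; first by rewrite mem_cat => ->.
by apply: phase_next_upd; constructor 3; split=> //; exists t.
Qed.

Lemma step_monotone s l s' : pstep s l s' -> monotone s s'.
Proof.
case=> {s l s'}; try by move=> *; apply: monotone_frame => // q; constructor 1.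
- move=> s p o _; split=> [q|//|q|j] /=; rewrite /upd; last by left.
    by case: eqP => [->|].
  by case: eqP => [-> /esym/n_Sn|_ _] //; constructor 1.
- by move=> s p _; apply: monotone_frame => //; apply: phase_next_upd; constructor 2.
- move=> s n1 n2 j src p c e _ correct_j; split=> //= [q _|j']; first by constructor 1.
  by rewrite /upd; case: eqP => [->|_]; [right; exists e | left].
- move=> s n1 n2 p src bd _; apply: monotone_frame => //; apply: phase_next_upd.
  by rewrite phase_crecv; constructor 1.
- by move=> s p v reps t cs_p *; apply: putdata_monotone; rewrite cs_p.
- by move=> s p reps t v cs_p *; apply: putdata_monotone; rewrite cs_p.
- by move=> s p t acks *; apply: monotone_frame => //; apply: phase_next_upd; constructor 2.
Qed.

Lemma monotone_has_tag_ge s s' j t : monotone s s' ->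
  uniq_tags (lists s j) -> has_tag_ge t (lists s j) -> has_tag_ge t (lists s' j).
Proof. by case=> _ _ _ /(_ j) [->|[e _ ->]] // uniq_l; apply: store_has_tag_ge. Qed.

Definition nodes_wf (s : pstate) : Prop :=
  forall j, uniq_tags (lists s j) /\ {subset lists s j <= signed s}.

Definition client_wf (s : pstate) (q : W) : Prop :=
  match cst s q with
  | PutData t acks =>
      uniq acks /\ forall j, j \in acks -> j \notin Byz -> has_tag_ge t (lists s j)
  | GetTag _ reps => uniq (unzip1 reps)
  | _ => True
  end.

Definition put_ok (s : pstate) q (e : entry W E) : Prop :=
  phase_ok (fun t => etag e = t) (phase_of (cst s q)).

Definition ack_ok (s : pstate) q j : Prop :=
  phase_ok (fun t => has_tag_ge t (lists s j)) (phase_of (cst s q)).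

(* A nonce is the number of an operation of its process, so it never exceeds [cnt]. *)
Definition msg_wf (s : pstate) (m : msg Node W E) : Prop :=
  (forall q, msrc m = proc q ->
    match mbody m with
    | QTag _ c => (c <= cnt s q : Prop)
    | Put _ c e => [/\ c <= cnt s q, e \in signed s & c = cnt s q -> put_ok s q e]
    | _ => True
    end) /\
  (forall j q, msrc m = node j -> j \notin Byz -> mdst m = proc q ->
    match mbody m with
    | RTag _ c _ => (c <= cnt s q : Prop)
    | Ack _ c => c <= cnt s q /\ (c = cnt s q -> ack_ok s q j)
    | _ => True
    end).

Definition wf (s : pstate) : Prop :=
  [/\ nodes_wf s, forall q, client_wf s q & forall m, List.In m (net s) -> msg_wf s m].

Lemma nodes_wf_step s l s' : nodes_wf s -> pstep s l s' -> nodes_wf s'.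
Proof.
move=> nwf /step_monotone[_ sg_sub _ lists_s'] j.
have [uniq_l l_sg] := nwf j.
case: (lists_s' j) => [->|[e _ ->]]; last split.
- by split=> // x /l_sg /sg_sub.
- exact: store_uniq_tags.
- by move=> x /(store_signed l_sg) /sg_sub.
Qed.

Lemma msg_wf_monotone s s' m : nodes_wf s -> monotone s s' -> msg_wf s m -> msg_wf s' m.
Proof.
move=> nwf mono; have [cnt_le sg_sub ph_next _] := mono.
have current q c : c <= cnt s q -> c = cnt s' q -> cnt s' q = cnt s q /\ c = cnt s q.
  move=> le_c c_eq; suff same : cnt s' q = cnt s q by rewrite c_eq same.
  by apply/eqP; rewrite eqn_leq cnt_le andbT -c_eq.
case=> from_proc from_node; split=> [q /from_proc|j q src_j correct_j dst_q].
  case: (mbody m) => // [p c|p c e]; first by move=> /leq_trans; apply.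
  case=> le_c e_sg put_c; split=> [||/(current _ _ le_c)[same_cnt c_eq]].
  - exact: leq_trans le_c _.
  - exact: sg_sub.
  - exact: phase_ok_next (ph_next q same_cnt) (put_c c_eq).
move: (from_node j q src_j correct_j dst_q); case: (mbody m) => // [p c e|p c].
  by move=> /leq_trans; apply.
case=> le_c ack_c; split=> [|/(current _ _ le_c)[same_cnt c_eq]]; first exact: leq_trans le_c _.
apply: phase_ok_next (ph_next q same_cnt) (ack_c c_eq) => t.
exact: monotone_has_tag_ge mono (nwf j).1.
Qed.

Lemma client_wf_frame s s' q : wf s -> monotone s s' ->
  cst s' q = cst s q -> client_wf s' q.
Proof.
move=> [nwf cwf _] mono cst_s'; move: (cwf q); rewrite /client_wf cst_s'.
case: (cst s q) => // t acks [uniq_acks acks_ge].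
by split=> // j j_acks correct_j; apply: monotone_has_tag_ge mono (nwf j).1 (acks_ge j _ _).
Qed.

Lemma client_wf_upd s s' p cs q : wf s -> monotone s s' ->
  cst s' = upd (cst s) p cs -> client_wf s' p -> client_wf s' q.
Proof.
move=> wf_s mono cst_s' wf_p; have [->|ne] := eqVneq q p; first exact: wf_p.
by apply: client_wf_frame wf_s mono _; rewrite cst_s' /upd (negPf ne).
Qed.

Lemma clients_wf_step s l s' : wf s -> pstep s l s' -> forall q, client_wf s' q.
Proof.
move=> wf_s st; have mono := step_monotone st; move: wf_s mono.
case: st => {s l s'}; try by intros; apply: (client_wf_frame (s := s)).
- move=> s p o _ wf_s mono q; apply: client_wf_upd wf_s mono _ _ => //.
  by rewrite /client_wf /= /upd eqxx; case: o.
- move=> s p _ wf_s mono q; apply: client_wf_upd wf_s mono _ _ => //.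
  by rewrite /client_wf /= /upd eqxx.
- move=> s n1 n2 p src bd net_s wf_s mono q; have [_ cwf mwf] := wf_s.
  apply: client_wf_upd wf_s mono _ _ => //.
  have in_m : List.In (Msg src (proc p) bd) (net s) := In_mid net_s.
  have ack_cur j : src = node j -> j \notin Byz -> bd = Ack E p (cnt s p) -> ack_ok s p j.
    move=> src_j correct_j bd_ack; have := (mwf _ in_m).2 j p src_j correct_j erefl.
    by rewrite /= bd_ack => -[_]; apply.
  move: (cwf p) ack_cur; rewrite /client_wf /ack_ok /= /upd eqxx.
  case: crecvP => [cs|j v reps e _ _ fresh|//|j t acks src_j bd_ack fresh] //.
    by rewrite /unzip1 map_rcons rcons_uniq fresh.
  move=> [uniq_acks acks_ge] /(_ j src_j) ack_j; rewrite rcons_uniq fresh; split=> // j'.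
  by rewrite mem_rcons inE => /predU1P[-> /ack_j /(_ bd_ack)|]; last exact: acks_ge.
- move=> s p v reps t _ _ _ _ wf_s mono q; apply: client_wf_upd wf_s mono _ _ => //.
  by rewrite /client_wf /= /upd eqxx.
- move=> s p reps t v _ _ vl occ _ _ _ wf_s mono q; apply: client_wf_upd wf_s mono _ _ => //.
  by rewrite /client_wf /= /upd eqxx.
- move=> s p t acks _ _ wf_s mono q; apply: client_wf_upd wf_s mono _ _ => //.
  by rewrite /client_wf /= /upd eqxx.
Qed.

Lemma msgs_wf_extend s s' : wf s -> monotone s s' ->
  (forall m, List.In m (net s') -> List.In m (net s) \/ msg_wf s' m) ->
  forall m, List.In m (net s') -> msg_wf s' m.
Proof. by move=> [nwf _ mwf] mono net_s' m /net_s'[/mwf|//]; apply: msg_wf_monotone. Qed.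

Lemma msg_wf_from_proc s m q : msrc m = proc q ->
  match mbody m with
  | QTag _ c => (c <= cnt s q : Prop)
  | Put _ c e => [/\ c <= cnt s q, e \in signed s & c = cnt s q -> put_ok s q e]
  | _ => True
  end -> msg_wf s m.
Proof. by move=> src_m ok; split=> [q'|j q']; rewrite src_m; [case=> <- | discriminate]. Qed.

Lemma msg_wf_from_node s m j : msrc m = node j ->
  (j \notin Byz -> forall q, mdst m = proc q ->
    match mbody m with
    | RTag _ c _ => (c <= cnt s q : Prop)
    | Ack _ c => c <= cnt s q /\ (c = cnt s q -> ack_ok s q j)
    | _ => True
    end) -> msg_wf s m.
Proof.
by move=> src_m ok; split=> [q|j' q]; rewrite src_m; [discriminate | case=> <- /ok; apply].
Qed.

Lemma In_bcast (p : W) (bd : body W E) (m : msg Node W E) :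
  List.In m (bcast Node p bd) -> msrc m = proc p /\ mbody m = bd.
Proof. by case/List.in_map_iff=> j [<- _]. Qed.

Lemma putdata_msgs_wf s p t v : wf s -> is_query (phase_of (cst s p)) ->
  forall m, List.In m (net (putdata encode s p t v)) -> msg_wf (putdata encode s p t v) m.
Proof.
move=> wf_s query; apply: msgs_wf_extend wf_s (putdata_monotone _ _ query) _.
move=> m /In_cat[|/List.in_map_iff[j [<- _]]]; [by left | right].
apply: (msg_wf_from_proc (q := p)) => //=; split=> [||_]; first by [].
  by rewrite mem_cat map_f ?orbT ?mem_enum.
by rewrite /put_ok /= /upd eqxx.
Qed.

Lemma msgs_wf_step s l s' : wf s -> pstep s l s' -> forall m, List.In m (net s') -> msg_wf s' m.
Proof.
move=> wf_s st; have mono := step_monotone st; move: wf_s mono.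
case: st => {s l s'}; try by intros; apply: (msgs_wf_extend (s := s)) => // ? ?; left.
- move=> s p o _ wf_s mono; apply: (msgs_wf_extend wf_s mono) => m.
  case/In_cat=> [|/In_bcast[src_m bd_m]]; [by left | right].
  apply: msg_wf_from_proc src_m _; rewrite bd_m /= /upd eqxx.
  by case: o {mono bd_m}.
- move=> s n1 n2 j src p c e net_s _ _ _ wf_s mono; apply: (msgs_wf_extend wf_s mono) => m.
  case/(In_replace_inv net_s) => [|->]; [by left | right].
  apply: (msg_wf_from_node (j := j)) => // _ q /= src_q.
  by have [_ _ /(_ _ (In_mid net_s))[/(_ q src_q)]] := wf_s.
- move=> s n1 n2 j src p c net_s _ wf_s mono; apply: (msgs_wf_extend wf_s mono) => m.
  case/(In_replace_inv net_s) => [|->]; [by left | right].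
  exact: (msg_wf_from_node (j := j)).
- move=> s n1 n2 j src p c e net_s _ wf_s mono; apply: (msgs_wf_extend wf_s mono) => m.
  case/(In_replace_inv net_s) => [|->]; [by left | right].
  apply: (msg_wf_from_node (j := j)) => // correct_j q /= src_q.
  have [nwf _ /(_ _ (In_mid net_s))[/(_ q src_q) /= [le_c e_sg put_c] _]] := wf_s.
  split=> // /put_c; apply: phase_ok_next; last by constructor 1.
  by move=> _ <-; rewrite /= /upd eqxx; apply: store_has_tag_ge_self => //; apply: (nwf j).1.
- move=> s n1 n2 j src bd net_s _ wf_s mono; apply: (msgs_wf_extend wf_s mono) => m.
  by move/(In_remove_inv net_s); left.
- move=> s n1 n2 p src bd net_s wf_s mono; apply: (msgs_wf_extend wf_s mono) => m.
  by move/(In_remove_inv net_s); left.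
- move=> s j dst bd byz_j _ wf_s mono; apply: (msgs_wf_extend wf_s mono) => m.
  case/In_cat=> [|[<-|[]]]; [by left | right].
  by apply: (msg_wf_from_node (j := j)); rewrite //= byz_j.
- by move=> s p v reps t cs_p _ _ _ wf_s _; apply: putdata_msgs_wf wf_s _; rewrite cs_p.
- by move=> s p reps t v cs_p _ vl occ _ _ _ wf_s _; apply: putdata_msgs_wf wf_s _; rewrite cs_p.
Qed.

Lemma wf_step s l s' : wf s -> pstep s l s' -> wf s'.
Proof.
move=> wf_s st; split; [|exact: clients_wf_step wf_s st|exact: msgs_wf_step wf_s st].
by case: wf_s => nwf _ _; apply: nodes_wf_step nwf st.
Qed.

Lemma wf_init t0 v0 p0 : wf (init encode t0 v0 p0).
Proof.
split=> // j; split=> // x; rewrite inE => /eqP ->.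
by rewrite map_f ?mem_enum.
Qed.

Lemma step_LInvoke s p n v s' : pstep s (LInvoke p n (OWrite v)) s' ->
  [/\ n = (cnt s p).+1, cnt s' p = n & phase_of (cst s' p) = WriteQuery].
Proof. by move=> st; inversion st; subst; rewrite /= /upd !eqxx. Qed.

Lemma step_LPut s p n t s' : pstep s (LPut V p n t) s' ->
  [/\ cnt s p = n, is_query (phase_of (cst s p)), cnt s' p = n
    & phase_of (cst s' p) = Putting t].
Proof.
move=> st; inversion st as [| | | | | | | |s1 p1 v reps t1 cs_p|s1 p1 reps t1 v cs_p|]; subst.
all: by rewrite /= /upd eqxx cs_p.
Qed.

Lemma step_LPut_write s p n t s' : pstep s (LPut V p n t) s' ->
  phase_of (cst s p) <> ReadQuery ->
  exists v reps t', [/\ cst s p = GetTag v reps, qsize Node k <= size reps,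
    all (fun x => tag_le (etag x.2) t') [seq x <- reps | x.2 \in signed s] & t = (t'.1.+1, p)].
Proof.
move=> st; inversion st as [| | | | | | | |s1 p1 v reps t' cs_p|s1 p1 reps t' v' cs_p|]; subst.
  by move=> _; exists v, reps, t'.
by rewrite cs_p.
Qed.

Lemma step_LComplete s p n s' : pstep s (LComplete V p n) s' ->
  exists t acks, [/\ cst s p = PutData V E t acks, qsize Node k <= size acks, cnt s p = n,
    phase_of (cst s' p) = Quiescent & s' = St (lists s) (net s) (cst s') (cnt s) (signed s)].
Proof. by move=> st; inversion st; subst; exists t, acks; rewrite /= /upd eqxx. Qed.

Definition current_op_inv (R : phase -> Prop) p n (s : pstate) : Prop :=
  n <= cnt s p /\ (cnt s p = n -> R (phase_of (cst s p))).

Lemma current_op_inv_step R p n s l s' :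
  (forall ph ph', phase_next ph ph' -> R ph -> R ph') ->
  current_op_inv R p n s -> pstep s l s' -> current_op_inv R p n s'.
Proof.
move=> R_next [le_n cur] /step_monotone[cnt_le _ ph_next _].
split=> [|cnt_n]; first exact: leq_trans le_n (cnt_le p).
have same : cnt s' p = cnt s p by apply/eqP; rewrite eqn_leq cnt_le andbT cnt_n.
by apply: R_next (ph_next p same) (cur _); rewrite -same.
Qed.

Section Visibility.
Variables (A : seq Node) (t : ptag W) (c0 : nat) (q : W).

Definition stored (s : pstate) : Prop :=
  forall j, j \in A -> j \notin Byz -> has_tag_ge t (lists s j).

Definition reply_ok (s : pstate) j (e : entry W E) : Prop :=
  j \in A -> j \notin Byz -> tag_le t (etag e) /\ e \in signed s.

Definition replies_ok (s : pstate) : Prop :=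
  forall j p c e, List.In (Msg (node j) (proc q) (RTag p c e)) (net s) -> c0 < c -> reply_ok s j e.

Definition collected_ok (s : pstate) : Prop :=
  forall v reps, cst s q = GetTag v reps -> c0 < cnt s q ->
  forall j e, (j, e) \in reps -> reply_ok s j e.

(* Holds from the moment an operation with tag [t] completes with acknowledgements from [A],
   [c0] being the counter of [q] at that moment. *)
Definition visible (s : pstate) : Prop := [/\ stored s, replies_ok s & collected_ok s].

Lemma reply_ok_monotone s s' j e : monotone s s' -> reply_ok s j e -> reply_ok s' j e.
Proof. by case=> _ sg_sub _ _ ok jA correct_j; have [le_t /sg_sub] := ok jA correct_j. Qed.

Lemma stored_step s l s' : nodes_wf s -> stored s -> pstep s l s' -> stored s'.
Proof.
move=> nwf st_ok /step_monotone mono j jA correct_j.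
exact: monotone_has_tag_ge mono (nwf j).1 (st_ok j jA correct_j).
Qed.

Lemma replies_ok_step s l s' :
  nodes_wf s -> stored s -> replies_ok s -> pstep s l s' -> replies_ok s'.
Proof.
move=> nwf st_ok rep_ok st; have mono := step_monotone st.
have old j p c e :
    List.In (Msg (node j) (proc q) (RTag p c e)) (net s) -> c0 < c -> reply_ok s' j e.
  by move=> in_m lt_c; apply: reply_ok_monotone mono (rep_ok _ _ _ _ in_m lt_c).
move: nwf st_ok old; case: st => {s l s' rep_ok mono}.
- by move=> s p o _ _ _ old j p' c e /In_cat[/old //|/In_bcast[]].
- by move=> s p _ _ _ old j p' c e /old.
- move=> s n1 n2 j src p c e net_s _ e_in e_max nwf st_ok old j' p' c' e'.
  case/(In_replace_inv net_s) => [/old //|[-> _ _ _ ->] _ jA correct_j].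
  have [y y_in le_ty] := hasP (st_ok j jA correct_j).
  by split; [apply: tag_le_trans le_ty (allP e_max y y_in) | apply: (nwf j).2].
- by move=> s n1 n2 j src p c net_s _ _ _ old j' p' c' e' /(In_replace_inv net_s)[/old|].
- by move=> s n1 n2 j src p c e net_s _ _ _ old j' p' c' e' /(In_replace_inv net_s)[/old|].
- by move=> s n1 n2 j src bd net_s _ _ _ old j' p' c' e' /(In_remove_inv net_s)/old.
- by move=> s n1 n2 p src bd net_s _ _ old j' p' c' e' /(In_remove_inv net_s)/old.
- move=> s j dst bd byz_j _ _ _ old j' p' c' e' /In_cat[/old //|[[<- _ _]|[]]] _ _.
  by rewrite byz_j.
- by move=> s p v reps t' _ _ _ _ _ _ old j' p' c' e' /In_cat[/old //|/List.in_map_iff[? []]].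
- move=> s p reps t' v _ _ vl occ _ _ _ _ _ old j' p' c' e'.
  by case/In_cat=> [/old //|/List.in_map_iff[? []]].
- by move=> s p t' acks _ _ _ _ old j' p' c' e' /old.
Qed.

Lemma collected_ok_frame s s' : monotone s s' -> collected_ok s ->
  cst s' q = cst s q -> cnt s' q = cnt s q -> collected_ok s'.
Proof.
move=> mono col_ok cst_q cnt_q v reps; rewrite cst_q cnt_q => cst_s lt_c j e in_reps.
exact: reply_ok_monotone mono (col_ok v reps cst_s lt_c j e in_reps).
Qed.

Lemma collected_ok_upd s s' p cs : monotone s s' -> collected_ok s ->
  cst s' = upd (cst s) p cs -> (q != p -> cnt s' q = cnt s q) ->
  (q = p -> collected_ok s') -> collected_ok s'.
Proof.
move=> mono col_ok cst_s' cnt_q at_p; have [/at_p //|ne] := eqVneq q p.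
by apply: collected_ok_frame mono col_ok _ (cnt_q ne); rewrite cst_s' /upd (negPf ne).
Qed.

Lemma collected_ok_step s l s' : replies_ok s -> collected_ok s -> pstep s l s' -> collected_ok s'.
Proof.
move=> rep_ok col_ok st; have mono := step_monotone st; move: mono rep_ok col_ok.
case: st => {s l s'}; try by intros; apply: (collected_ok_frame (s := s)).
- move=> s p o _ mono _ col_ok; apply: collected_ok_upd mono col_ok _ _ _ => //=.
    by rewrite /upd => /negPf ->.
  by move=> qp v reps; subst p; rewrite /= /upd eqxx; case: o => // v' [_ <-].
- move=> s p _ mono _ col_ok; apply: collected_ok_upd mono col_ok _ _ _ => //= qp.
  by move=> v reps; subst p; rewrite /= /upd eqxx.
- move=> s n1 n2 p src bd net_s mono rep_ok col_ok.
  apply: (collected_ok_upd mono col_ok) => //= qp; subst p.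
  move: col_ok; rewrite /collected_ok /= /upd eqxx.
  case: crecvP => [cs|j v reps e src_j bd_tag _|//|//] col_ok v' reps' //.
    by move=> /col_ok; apply.
  case=> _ <- lt_c j' e'; rewrite mem_rcons inE => /predU1P[[-> ->]|in_reps].
    by apply: (rep_ok j q) lt_c; rewrite -src_j -bd_tag; apply: In_mid net_s.
  exact: col_ok lt_c _ _ in_reps.
- move=> s p v reps t' _ _ _ _ mono _ col_ok; apply: collected_ok_upd mono col_ok _ _ _ => //= qp.
  by move=> v' reps'; subst p; rewrite /= /upd eqxx.
- move=> s p reps t' v _ _ vl occ _ _ _ mono _ col_ok.
  apply: collected_ok_upd mono col_ok _ _ _ => //= qp.
  by move=> v' reps'; subst p; rewrite /= /upd eqxx.
- move=> s p t' acks _ _ mono _ col_ok; apply: collected_ok_upd mono col_ok _ _ _ => //= qp.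
  by move=> v reps; subst p; rewrite /= /upd eqxx.
Qed.

End Visibility.

Lemma visible_step A t c0 q s l s' :
  wf s -> visible A t c0 q s -> pstep s l s' -> visible A t c0 q s'.
Proof.
move=> [nwf _ _] [st_ok rep_ok col_ok] st; split.
- exact: stored_step nwf st_ok st.
- exact: replies_ok_step nwf st_ok rep_ok st.
- exact: collected_ok_step rep_ok col_ok st.
Qed.

Lemma visible_after_complete s p n s' q : wf s -> pstep s (LComplete V p n) s' ->
  exists t acks, [/\ cst s p = PutData V E t acks, uniq acks, qsize Node k <= size acks
                   & visible acks t (cnt s' q) q s'].
Proof.
move=> [_ cwf mwf] /step_LComplete[t [acks [cst_p big _ _ ->]]] /=.
have := cwf p; rewrite /client_wf cst_p => -[uniq_acks acks_ge].
exists t, acks; split=> //; split=> [j|j p' c e in_m|v reps _] /=; last by rewrite ltnn.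
  exact: acks_ge.
move=> lt_c _ correct_j; have := (mwf _ in_m).2 j q erefl correct_j erefl.
by rewrite /= leqNgt lt_c.
Qed.

Lemma visible_tag_le_max_reply A t c0 q s v reps t' :
  3 * #|Byz| + k < #|Node| -> uniq A -> qsize Node k <= size A ->
  visible A t c0 q s -> wf s -> cst s q = GetTag v reps -> c0 < cnt s q ->
  qsize Node k <= size reps ->
  all (fun x => tag_le (etag x.2) t') [seq x <- reps | x.2 \in signed s] -> tag_le t t'.
Proof.
move=> resilient uniqA bigA [_ _ col_ok] [_ cwf _] cst_q lt_c big max_t'.
have uniq_reps : uniq (unzip1 reps) by move: (cwf q); rewrite /client_wf cst_q.
have big_reps : qsize Node k <= size (unzip1 reps) by rewrite size_map.
have [j [jA /mapP[[j' e] in_reps /= eq_j] correct_j]] :=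
  quorum_intersect resilient uniqA uniq_reps bigA big_reps.
subst j'; have [le_t e_sg] := col_ok v reps cst_q lt_c j e in_reps jA correct_j.
by apply: tag_le_trans le_t (allP max_t' (j, e) _); rewrite mem_filter e_sg.
Qed.

Lemma run_trajectory s tr s' : run k delta Byz encode decode s tr s' ->
  exists f : nat -> pstate,
    f 0 = s /\ forall i, i < size tr -> pstep (f i) (nth (LInternal W V) tr i) (f i.+1).
Proof.
elim=> {s tr s'} [s|s l s1 tr s' st _ [f [f0 f_step]]]; first by exists (fun=> s).
exists (fun i => if i is i'.+1 then f i' else s); split=> // -[_|i /f_step //].
by rewrite /= f0.
Qed.

Section Trajectory.
Variables (tr : seq (label W V)) (f : nat -> pstate).
Hypothesis f_step : forall i, i < size tr -> pstep (f i) (nth (LInternal W V) tr i) (f i.+1).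
Hypothesis wf_f0 : wf (f 0).
Local Notation event i := (nth (LInternal W V) tr i).

Lemma trajectory_ind (P : pstate -> Prop) i j :
  (forall s l s', P s -> pstep s l s' -> P s') -> i <= j <= size tr -> P (f i) -> P (f j).
Proof.
move=> P_step /andP[]; elim: j => [|j IH]; first by rewrite leqn0 => /eqP->.
rewrite leq_eqVlt => /predU1P[-> //|le_ij] lt_j P_i.
exact: P_step (IH le_ij (ltnW lt_j) P_i) (f_step lt_j).
Qed.

Lemma event_step i l : event i = l -> l <> LInternal W V -> i < size tr /\ pstep (f i) l (f i.+1).
Proof.
move=> ev_i not_int; have [lt_i|le_i] := ltnP i (size tr).
  by split=> //; rewrite -ev_i; apply: f_step.
by case: not_int; rewrite -ev_i nth_default.
Qed.

Lemma trajectory_wf i : i <= size tr -> wf (f i).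
Proof. by move=> le_i; apply: (trajectory_ind (@wf_step) (i := 0)). Qed.

Lemma trajectory_cnt p i j : i <= j <= size tr -> cnt (f i) p <= cnt (f j) p.
Proof.
move=> le_ij; apply: (trajectory_ind (P := fun s => cnt (f i) p <= cnt s p) _ le_ij) => //.
by move=> s l s' le_i /step_monotone[cnt_le _ _ _]; apply: leq_trans le_i (cnt_le p).
Qed.

Lemma visible_trajectory A t c0 q i j : i <= j <= size tr ->
  visible A t c0 q (f i) -> visible A t c0 q (f j).
Proof.
move=> /andP[le_ij le_j] vis_i.
suff [] : wf (f j) /\ visible A t c0 q (f j) by [].
apply: (trajectory_ind (P := fun s => wf s /\ visible A t c0 q s) (i := i)).
- by move=> s l s' [wf_s vis_s] st; split; [apply: wf_step st | apply: visible_step st].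
- by rewrite le_ij.
- by split=> //; apply: trajectory_wf; apply: leq_trans le_ij le_j.
Qed.

Lemma current_op_inv_trajectory R p n i j :
  (forall ph ph', phase_next ph ph' -> R ph -> R ph') -> i <= j <= size tr ->
  current_op_inv R p n (f i) -> current_op_inv R p n (f j).
Proof. by move=> R_next; apply: trajectory_ind => s l s'; apply: current_op_inv_step. Qed.

Lemma invoke_before_put p n v t ii ip :
  event ii = LInvoke p n (OWrite v) -> event ip = LPut V p n t -> ii < ip.
Proof.
move=> ev_ii ev_ip.
have [lt_ii /step_LInvoke[n_eq _ _]] := event_step ev_ii ltac:(discriminate).
have [lt_ip /step_LPut[_ _ cnt_ip' _]] := event_step ev_ip ltac:(discriminate).
case: ltngtP => // [lt_ip_ii|eq_i]; last by move: ev_ii; rewrite eq_i ev_ip.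
have : cnt (f ip.+1) p <= cnt (f ii) p by apply: trajectory_cnt; rewrite lt_ip_ii ltnW.
by rewrite cnt_ip' n_eq ltnn.
Qed.

Lemma complete_putting_tag p n t ip ic :
  event ip = LPut V p n t -> event ic = LComplete V p n -> phase_of (cst (f ic) p) = Putting t.
Proof.
move=> ev_ip ev_ic.
have [lt_ip /step_LPut[cnt_ip query cnt_ip' ph_ip']] := event_step ev_ip ltac:(discriminate).
have [lt_ic /step_LComplete[t' [acks [cst_ic _ cnt_ic ph_ic' f_ic]]]] :=
  event_step ev_ic ltac:(discriminate).
pose R := phase_ok (fun t'' => t'' = t).
have R_next ph ph' : phase_next ph ph' -> R ph -> R ph' by apply: phase_ok_next.
case: (ltngtP ip ic) => [lt_ip_ic|lt_ic_ip|eq_i].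
- have [_ /(_ cnt_ic)] : current_op_inv R p n (f ic).
    apply: (current_op_inv_trajectory R_next (i := ip.+1)); first by rewrite lt_ip_ic ltnW.
    by split; rewrite cnt_ip' // ph_ip'.
  by rewrite cst_ic /= => ->.
- have [_ /(_ cnt_ip)] : current_op_inv R p n (f ip).
    apply: (current_op_inv_trajectory R_next (i := ic.+1)); first by rewrite lt_ic_ip ltnW.
    by rewrite f_ic; split; rewrite /= cnt_ic // ph_ic'.
  by move: query; rewrite /R; case: (phase_of _).
- by move: ev_ip; rewrite eq_i ev_ic.
Qed.

Lemma write_put_not_read p n v t ii ip :
  event ii = LInvoke p n (OWrite v) -> event ip = LPut V p n t ->
  phase_of (cst (f ip) p) <> ReadQuery.
Proof.
move=> ev_ii ev_ip; have lt_i := invoke_before_put ev_ii ev_ip.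
have [_ /step_LInvoke[_ cnt_ii' ph_ii']] := event_step ev_ii ltac:(discriminate).
have [lt_ip /step_LPut[cnt_ip _ _ _]] := event_step ev_ip ltac:(discriminate).
pose R ph := ph <> ReadQuery.
have R_next ph ph' : phase_next ph ph' -> R ph -> R ph' by case=> [->|->|[_ [t' ->]]].
have [_] : current_op_inv R p n (f ip).
  apply: (current_op_inv_trajectory R_next (i := ii.+1)); first by rewrite lt_i ltnW.
  by split; rewrite cnt_ii' // ph_ii'.
exact.
Qed.

Hypothesis resilient : 3 * #|Byz| + k < #|Node|.

Lemma later_write_tag_gt p1 n1 t1 p2 n2 v2 t2 ip1 ic1 ii2 ip2 :
  event ip1 = LPut V p1 n1 t1 -> event ic1 = LComplete V p1 n1 ->
  event ii2 = LInvoke p2 n2 (OWrite v2) -> ic1 < ii2 -> event ip2 = LPut V p2 n2 t2 ->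
  tag_lt t1 t2.
Proof.
move=> put1 done1 invoke2 lt12 put2.
have [lt_ic1 step_done1] := event_step done1 ltac:(discriminate).
have [t [acks [cst1 uniq_acks big_acks vis]]] :=
  visible_after_complete p2 (trajectory_wf (ltnW lt_ic1)) step_done1.
have t_eq : t = t1 by have := complete_putting_tag put1 done1; rewrite cst1 => -[].
set c0 := cnt (f ic1.+1) p2 in vis; rewrite t_eq in vis.
have lt_i2 := invoke_before_put invoke2 put2.
have [_ /step_LInvoke[n2_eq _ _]] := event_step invoke2 ltac:(discriminate).
have [lt_ip2 step_put2] := event_step put2 ltac:(discriminate).
have c0_lt : c0 < cnt (f ip2) p2.
  have [cnt_ip2 _ _ _] := step_LPut step_put2.
  rewrite cnt_ip2 n2_eq ltnS; apply: trajectory_cnt.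
  by rewrite lt12 ltnW // (ltn_trans lt_i2 lt_ip2).
have vis2 : visible acks t1 c0 p2 (f ip2).
  by apply: visible_trajectory vis; rewrite (leq_trans lt12 (ltnW lt_i2)) ltnW.
have [v [reps [t' [cst2 big_reps max_t' ->]]]] :=
  step_LPut_write step_put2 (write_put_not_read invoke2 put2).
apply/tag_lt_next/(visible_tag_le_max_reply resilient uniq_acks big_acks vis2 _ cst2 c0_lt)=> //.
exact: trajectory_wf (ltnW lt_ip2).
Qed.

End Trajectory.

End Protocol.

Theorem mainTheorem6
  (Node : finType) (d : Order.disp_t) (W : orderType d) (V : Type) (E : eqType)
  (k b delta : nat) (Byz : {set Node})
  (encode : V -> Node -> E) (decode : seq E -> V)
  (t0 : ptag W) (v0 : V) (p0 : W)
  (hk : (0 < k)%N) (hdelta : (0 < delta)%N)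
  (hcode : forall (v : V) (S : seq Node),
      uniq S -> (k <= size S)%N -> decode [seq encode v j | j <- S] = v)
  (hByz : (#|Byz| <= b)%N) (hb : (3 * b + k < #|Node|)%N)
  (tr : seq (label W V)) (s : state Node W V E)
  (hrun : run k delta Byz encode decode (init encode t0 v0 p0) tr s)
  (p1 : W) (n1 : nat) (t1 : ptag W) (p2 : W) (n2 : nat) (v2 : V) (t2 : ptag W)
  (ip1 ic1 ii2 ip2 ic2 : nat) :
  nth (LInternal W V) tr ip1 = LPut V p1 n1 t1 ->
  nth (LInternal W V) tr ic1 = LComplete V p1 n1 ->
  nth (LInternal W V) tr ii2 = LInvoke p2 n2 (OWrite v2) ->
  (ic1 < ii2)%N ->
  nth (LInternal W V) tr ip2 = LPut V p2 n2 t2 ->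
  nth (LInternal W V) tr ic2 = LComplete V p2 n2 ->
  tag_lt t1 t2.
Proof.
move=> put1 done1 invoke2 lt12 put2 _.
have [f [f0 f_step]] := run_trajectory hrun.
have wf_f0 : wf Byz (f 0) by rewrite f0; apply: wf_init.
have resilient : 3 * #|Byz| + k < #|Node| by lia.
exact: (later_write_tag_gt f_step wf_f0 resilient put1 done1 invoke2 lt12 put2).
Qed.
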